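(* Let $m\ge1$, $d=2m$, and work in $\mathcal{H}^{\mathrm B}$. Then: (a) $u_j^+$ commutes with $T_i$ for all $i\in\{0,1,\dots,d-1\}\setminus\{j\}$. (b) For $i\ge1$, $u_i^+T_{i\to0}=u_{i+1}^+T_{1\to i}^{-1}-q^iu_i^+T_{1\to i}^{-1}$. (c) Let $x\in\Sigma_{2m}$ and $i\ge1$. Then $u_i^+T_xT_0\in u_i^+\mathcal{H}+\sum_{j>i}\mathcal{H}u_j^+\mathcal{H}$. In particular, $u_i^+T_{i\to0}\in u_i^+(-q^iT_{1\to i}^{-1})+\sum_{j>i}\mathcal{H}u_j^+\mathcal{H}$.
   Context: $K$ is a commutative ring and $q\in K^\times$. $\mathcal{H}^{\mathrm B}=\mathcal{H}_{(1,q)}(W(\mathrm B_{2m}))$ is the associative $K$-algebra generated by $T_0,T_1,\dots,T_{2m-1}$ subject to the type $\mathrm B_{2m}$ braid relations ($T_0T_1T_0T_1=T_1T_0T_1T_0$, $T_0T_i=T_iT_0$ for $i\ge2$, $T_iT_{i+1}T_i=T_{i+1}T_iT_{i+1}$ and $T_iT_j=T_jT_i$ for $i,j\ge1$, $|i-j|\ge2$) and quadratic relations $T_0^2=1$, $T_i^2=(q-1)T_i+q$ for $i\ge1$. $\mathcal{H}=\mathcal{H}_q(\Sigma_{2m})$ is the subalgebra generated by $T_1,\dots,T_{2m-1}$, and $T_x=T_{i_1}\cdots T_{i_r}$ for a reduced expression $x=s_{i_1}\cdots s_{i_r}$. For $a,b\ge0$: $T_{a\to b}=T_aT_{a-1}\cdots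 T_b$ if $a>b$, $T_a$ if $a=b$, $T_aT_{a+1}\cdots T_b$ if $a<b$; $T_{a\to b\to a}=T_aT_{a-1}\cdots T_{b+1}T_bT_{b+1}\cdots T_a$ if $a>b$, $T_a$ if $a=b$, and $T_a\cdots T_{b-1}T_bT_{b-1}\cdots T_a$ if $a<b$. The Jucys–Murphy type elements are $u_k^{\pm}=\prod_{i=0}^{k-1}(q^i\pm T_{i\to0\to i})$ (the factors commute pairwise), with $u_0^\pm=1$. *)

From HB Require Import structures.
From mathcomp Require Import all_boot all_order all_algebra all_fingroup.
Set Implicit Arguments. Unset Strict Implicit. Unset Printing Implicit Defensive.
Import Order.TTheory GRing.Theory Num.Theory.
Local Open Scope ring_scope.

(* Generators are given as a function T : nat -> A; only T 0 .. T (d-1) matter. *)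

(* Defining relations of H_(1,q)(W(B_d)) (type B_d braid relations and quadratic
   relations T_0^2 = 1, T_i^2 = (q-1)T_i + q for i >= 1). *)
Definition HeckeB_rel (K : comPzRingType) (A : algType K) (d : nat) (q : K)
    (T : nat -> A) : Prop :=
  [/\ (1 < d)%N -> T 0%N * T 1%N * T 0%N * T 1%N = T 1%N * T 0%N * T 1%N * T 0%N,
      forall i, (2 <= i < d)%N -> T 0%N * T i = T i * T 0%N,
      forall i, (1 <= i)%N -> (i.+1 < d)%N ->
        T i * T i.+1 * T i = T i.+1 * T i * T i.+1,
      forall i j, (1 <= i < d)%N -> (1 <= j < d)%N -> ((i + 2 <= j) || (j + 2 <= i))%N ->
        T i * T j = T j * T i
    & (T 0%N * T 0%N = 1 /\ forall i, (1 <= i < d)%N -> T i * T i = (q - 1) *: T i + q%:A) ].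

Definition Tw (A : pzRingType) (T : nat -> A) (w : seq nat) : A := \prod_(k <- w) T k.

Definition word_to (a b : nat) : seq nat :=
  if (b <= a)%N then rev (iota b (a - b).+1) else iota a (b - a).+1.

Definition Tto (A : pzRingType) (T : nat -> A) (a b : nat) : A := Tw T (word_to a b).

Definition Tarc (A : pzRingType) (T : nat -> A) (a b : nat) : A :=
  if a == b then T a
  else if (b < a)%N then Tw T (word_to a b ++ word_to b.+1 a)
  else Tw T (word_to a b ++ word_to b.-1 a).

Definition uplus (K : comPzRingType) (A : algType K) (q : K) (T : nat -> A)
    (k : nat) : A :=
  \prod_(0 <= i < k) ((q ^+ i)%:A + Tarc T i 0).

(* membership in the subalgebra H generated by T_1, ..., T_{d-1}
   (K-linear combinations of products of these generators) *)
Definition inH (K : comPzRingType) (A : algType K) (d : nat) (T : nat -> A)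
    (a : A) : Prop :=
  exists s : seq (K * seq nat),
    (forall p, p \in s -> all (fun k => (1 <= k < d)%N) p.2) /\
    a = \sum_(p <- s) p.1 *: Tw T p.2.

Definition inSumHuH (K : comPzRingType) (A : algType K) (d : nat) (q : K)
    (T : nat -> A) (i : nat) (a : A) : Prop :=
  exists s : seq (nat * A * A),
    (forall e, e \in s -> [/\ (i < e.1.1 <= d)%N, inH d T e.1.2 & inH d T e.2]) /\
    a = \sum_(e <- s) e.1.2 * uplus q T e.1.1 * e.2.

(* Symmetric group Sigma_d acting on {0,..,d-1}; s_k (1 <= k <= d-1) swaps k-1 and k
   (i.e. k and k+1 in 1-based numbering). *)
Definition sfun (k p : nat) : nat :=
  if p == k.-1 then k else if p == k then k.-1 else p.

Fixpoint wfun (w : seq nat) (p : nat) : nat :=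
  if w is k :: w' then sfun k (wfun w' p) else p.

Definition ninv (d : nat) (x : 'S_d) : nat :=
  \sum_(a < d) \sum_(b < d) ((a < b) && (x b < x a))%N.

Definition reduced_expr (d : nat) (x : 'S_d) (w : seq nat) : Prop :=
  [/\ all (fun k => (1 <= k < d)%N) w,
      (forall p : 'I_d, val (x p) = wfun w (val p))
    & size w = ninv x].

(* Write L_k = T_{k->0->k}, so that u_j^+ = prod_{k<j} (q^k + L_k) and
   L_{k+1} = T_{k+1} L_k T_{k+1}.  The L_k commute pairwise, T_i commutes
   with L_k for i not in {k, k+1}, and the quadratic relation makes T_{k+1}
   commute with (q^k + L_k)(q^{k+1} + L_{k+1}); this gives (a).  Part (b) is
   the identity L_i = T_{i->0} T_{1->i} multiplied by u_i^+ on the left and by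
   T_{1->i}^-1 on the right.  For (c), H T_0 is spanned by the T_{a->0} H
   (a < d), and u_i^+ T_{a->0} lies in u_i^+ H + sum_{j>i} H u_j^+ H: for
   a < i because u_i^+ T_0 = u_i^+, for a = i by (b), and for a > i because
   T_a, ..., T_{i+1} commute with u_i^+. *)

From HB Require Import structures.
From mathcomp Require Import all_boot all_order all_algebra all_fingroup.
From mathcomp Require Import zify.
Import Order.TTheory GRing.Theory Num.Theory.
Set Implicit Arguments. Unset Strict Implicit. Unset Printing Implicit Defensive.
Local Open Scope ring_scope.

Local Notation comm := GRing.comm.

Section Words.
Variables (A : pzRingType) (T : nat -> A).

Lemma Tw_nil : Tw T [::] = 1.
Proof. exact: big_nil. Qed.

Lemma Tw_cons k w : Tw T (k :: w) = T k * Tw T w.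
Proof. exact: big_cons. Qed.

Lemma Tw_cat w1 w2 : Tw T (w1 ++ w2) = Tw T w1 * Tw T w2.
Proof. exact: big_cat. Qed.

Lemma Tw_seq1 k : Tw T [:: k] = T k.
Proof. exact: big_seq1. Qed.

Lemma iotaSr m n : iota m n.+1 = rcons (iota m n) (m + n)%N.
Proof. by rewrite -cats1 -addn1 iotaD. Qed.

Lemma Tto_00 : Tto T 0 0 = T 0%N.
Proof. exact: Tw_seq1. Qed.

Lemma Tto_S0 a : Tto T a.+1 0 = T a.+1 * Tto T a 0.
Proof. by rewrite /Tto /word_to !leq0n !subn0 iotaSr rev_rcons Tw_cons. Qed.

Lemma Tto_1S a : Tto T 1 a.+1 = Tw T (iota 1 a.+1).
Proof. by case: a => [|a] //; rewrite /Tto /word_to /= subn1. Qed.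

Lemma Tarc_00 : Tarc T 0 0 = T 0%N.
Proof. by rewrite /Tarc eqxx. Qed.

Lemma Tarc_S0_Tto k : Tarc T k.+1 0 = Tto T k.+1 0 * Tto T 1 k.+1.
Proof. by rewrite /Tarc /= Tw_cat. Qed.

Lemma Tarc_S0 k : Tarc T k.+1 0 = T k.+1 * Tarc T k 0 * T k.+1.
Proof.
rewrite Tarc_S0_Tto Tto_S0 Tto_1S iotaSr -cats1 Tw_cat Tw_seq1 add1n !mulrA.
case: k => [|k]; first by rewrite Tarc_00 Tto_00 Tw_nil mulr1.
by rewrite Tarc_S0_Tto Tto_1S !mulrA.
Qed.

End Words.

Section JucysMurphy.
Variables (K : comPzRingType) (A : algType K) (q : K) (T : nat -> A).
Local Notation u := (uplus q T).

Lemma uplusS k : u k.+1 = u k * ((q ^+ k)%:A + Tarc T k 0).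
Proof. exact: big_nat_recr. Qed.

Lemma uplus_Tto i y : (1 <= i)%N -> Tto T 1 i * y = 1 ->
  u i * Tto T i 0 = u i.+1 * y - q ^+ i *: (u i * y).
Proof.
case: i => [|i] // _ hy.
rewrite (uplusS i.+1) Tarc_S0_Tto mulrDr mulr_algr !mulrDl -scalerAl addrC addKr.
by rewrite -!mulrA hy mulr1.
Qed.

Lemma uplus_Tto_split i y : (1 <= i)%N -> Tto T 1 i * y = 1 ->
  u i * Tto T i 0 = u i * (- q ^+ i *: y) + u i.+1 * y.
Proof. by move=> i1 hy; rewrite (uplus_Tto i1 hy) scaleNr scalerAr mulrN addrC. Qed.

End JucysMurphy.

Lemma commr_quadratic_sandwich (K : comPzRingType) (A : algType K) (q c : K)
    (t L : A) :
  t * t = (q - 1) *: t + q%:A -> comm L (t * L * t) ->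
  comm t ((c%:A + L) * ((c * q)%:A + t * L * t)).
Proof.
move=> tq cLL.
have tL : t * (t * L * t) = (q - 1) *: (t * L * t) + q *: (L * t).
  by rewrite !mulrA tq !mulrDl mulr_algl -!scalerAl.
have Lt : t * L * t * t = (q - 1) *: (t * L * t) + q *: (t * L).
  by rewrite -!mulrA tq !mulrDr mulr_algr -!scalerAr !mulrA.
have tLL : t * (L * (t * L * t)) = L * (t * L * t) * t.
  by transitivity (t * L * t * L * t); rewrite ?[in RHS]cLL ?mulrA.
have -> : (c%:A + L) * ((c * q)%:A + t * L * t) =
    (c * (c * q))%:A + c *: (t * L * t) + (c * q) *: L + L * (t * L * t).
  by rewrite mulrDl !mulrDr mulr_algl mulr_algr mulr_algl scalerA !addrA.
rewrite /comm !mulrDr !mulrDl -!scalerAr -!scalerAl tL Lt tLL.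
rewrite !scalerDr !scalerA mulr1 mul1r -!addrA.
by congr (_ + (_ + _)); rewrite addrCA.
Qed.

Lemma commr_braid_sandwich (R : pzRingType) (s t x : R) :
  s * t * s = t * s * t -> comm t x -> comm s (t * (s * x * s) * t).
Proof.
move=> br tx; rewrite /comm.
have br' : s * (t * s) = t * (s * t) by rewrite !mulrA.
have -> : s * (t * (s * x * s) * t) = t * s * (t * x) * s * t by rewrite !mulrA br.
by rewrite tx -!mulrA br'.
Qed.

Section Subspaces.
Variables (K : comPzRingType) (A : algType K) (d : nat) (q : K) (T : nat -> A).
Local Notation inH := (inH d T).
Local Notation inS := (inSumHuH d q T).
Local Notation u := (uplus q T).
Local Notation okw := (all (fun k => (1 <= k < d)%N)).

Lemma inH_ind (P : A -> Prop) :
    P 0 -> (forall x y, P x -> P y -> P (x + y)) ->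
    (forall c x, P x -> P (c *: x)) -> (forall w, okw w -> P (Tw T w)) ->
  forall x, inH x -> P x.
Proof.
move=> P0 PD PZ Pw x [s [sw ->]]; elim: s sw => [|[c w] s IHs] sw.
  by rewrite big_nil.
rewrite big_cons; apply: PD; first by apply/PZ/Pw/(sw (c, w)); rewrite mem_head.
by apply: IHs => p ps; apply: sw; rewrite in_cons ps orbT.
Qed.

Lemma inH0 : inH 0.
Proof. by exists [::]; rewrite big_nil. Qed.

Lemma inHD x y : inH x -> inH y -> inH (x + y).
Proof.
move=> [s1 [s1w ->]] [s2 [s2w ->]]; exists (s1 ++ s2); rewrite big_cat.
by split=> // p; rewrite mem_cat => /orP[]; [apply: s1w | apply: s2w].
Qed.

Lemma inHZ c x : inH x -> inH (c *: x).
Proof.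
move=> [s [sw ->]]; exists [seq (c * p.1, p.2) | p <- s]; split.
  by move=> _ /mapP[p ps ->]; exact: (sw p ps).
by rewrite big_map scaler_sumr; apply: eq_bigr => p _; rewrite scalerA.
Qed.

Lemma inH_Tw w : okw w -> inH (Tw T w).
Proof.
move=> wd; exists [:: (1, w)]; rewrite big_seq1 scale1r.
by split=> // p; rewrite mem_seq1 => /eqP ->.
Qed.

Lemma inH1 : inH 1.
Proof. by rewrite -(Tw_nil T); apply: inH_Tw. Qed.

Lemma inH_T k : (1 <= k < d)%N -> inH (T k).
Proof. by move=> kd; rewrite -Tw_seq1; apply: inH_Tw; rewrite /= kd. Qed.

Lemma inHM x y : inH x -> inH y -> inH (x * y).
Proof.
move=> Hx Hy; move: x Hx; apply: inH_ind => [|x1 x2 H1 H2|c x Hx|w wd].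
- by rewrite mul0r; apply: inH0.
- by rewrite mulrDl; apply: inHD.
- by rewrite -scalerAl; apply: inHZ.
move: y Hy; apply: inH_ind => [|y1 y2 H1 H2|c y Hy|w' w'd].
- by rewrite mulr0; apply: inH0.
- by rewrite mulrDr; apply: inHD.
- by rewrite -scalerAr; apply: inHZ.
by rewrite -Tw_cat; apply: inH_Tw; rewrite all_cat wd w'd.
Qed.

Lemma inS_ind i (P : A -> Prop) :
    P 0 -> (forall x y, P x -> P y -> P (x + y)) ->
    (forall j a b, (i < j <= d)%N -> inH a -> inH b -> P (a * u j * b)) ->
  forall x, inS i x -> P x.
Proof.
move=> P0 PD Pu x [s [sj ->]]; elim: s sj => [|[[j a] b] s IHs] sj.
  by rewrite big_nil.
rewrite big_cons; apply: PD; first by have [] := sj (j, a, b) (mem_head _ _); apply: Pu.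
by apply: IHs => e es; apply: sj; rewrite in_cons es orbT.
Qed.

Lemma inS0 i : inS i 0.
Proof. by exists [::]; rewrite big_nil. Qed.

Lemma inSD i x y : inS i x -> inS i y -> inS i (x + y).
Proof.
move=> [s1 [s1j ->]] [s2 [s2j ->]]; exists (s1 ++ s2); rewrite big_cat.
by split=> // e; rewrite mem_cat => /orP[]; [apply: s1j | apply: s2j].
Qed.

Lemma inS_HuH i j a b : (i < j <= d)%N -> inH a -> inH b -> inS i (a * u j * b).
Proof.
move=> ij Ha Hb; exists [:: (j, a, b)]; rewrite big_seq1.
by split=> // e; rewrite mem_seq1 => /eqP ->.
Qed.

Lemma inS_uplus i j b : (i < j <= d)%N -> inH b -> inS i (u j * b).
Proof. by move=> ij Hb; rewrite -[u j]mul1r; apply: inS_HuH => //; apply: inH1. Qed.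

Lemma inSZ i c x : inS i x -> inS i (c *: x).
Proof.
move: x; apply: inS_ind => [|x y Hx Hy|j a b ij Ha Hb].
- by rewrite scaler0; apply: inS0.
- by rewrite scalerDr; apply: inSD.
- by rewrite !scalerAl; apply: inS_HuH => //; apply: inHZ.
Qed.

Lemma inS_mull i a x : inH a -> inS i x -> inS i (a * x).
Proof.
move=> Ha; move: x; apply: inS_ind => [|x y Hx Hy|j a' b ij Ha' Hb].
- by rewrite mulr0; apply: inS0.
- by rewrite mulrDr; apply: inSD.
- by rewrite !mulrA; apply: inS_HuH => //; apply: inHM.
Qed.

Lemma inS_mulr i a x : inH a -> inS i x -> inS i (x * a).
Proof.
move=> Ha; move: x; apply: inS_ind => [|x y Hx Hy|j a' b ij Ha' Hb].
- by rewrite mul0r; apply: inS0.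
- by rewrite mulrDl; apply: inSD.
- by rewrite -mulrA; apply: inS_HuH => //; apply: inHM.
Qed.

Definition inUH i x := exists h r, inH h /\ inS i r /\ x = u i * h + r.

Lemma inUH_uHS i h r : inH h -> inS i r -> inUH i (u i * h + r).
Proof. by move=> Hh Sr; exists h, r. Qed.

Lemma inUH_uH i h : inH h -> inUH i (u i * h).
Proof. by move=> Hh; rewrite -[u i * h]addr0; apply: inUH_uHS (inS0 _). Qed.

Lemma inUHD i x y : inUH i x -> inUH i y -> inUH i (x + y).
Proof.
move=> [h1 [r1 [H1 [S1 ->]]]] [h2 [r2 [H2 [S2 ->]]]].
by rewrite addrACA -mulrDr; apply: inUH_uHS; [apply: inHD | apply: inSD].
Qed.

Lemma inUHZ i c x : inUH i x -> inUH i (c *: x).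
Proof.
move=> [h [r [Hh [Sr ->]]]].
by rewrite scalerDr scalerAr; apply: inUH_uHS; [apply: inHZ | apply: inSZ].
Qed.

Lemma inUH_mulr i a x : inH a -> inUH i x -> inUH i (x * a).
Proof.
move=> Ha [h [r [Hh [Sr ->]]]].
by rewrite mulrDl -mulrA; apply: inUH_uHS; [apply: inHM | apply: inS_mulr].
Qed.

End Subspaces.

Section HeckeB.
Variables (K : comPzRingType) (A : algType K) (q : K) (T : nat -> A) (d : nat).
Hypothesis HB : HeckeB_rel d q T.
Local Notation inH := (inH d T).
Local Notation inS := (inSumHuH d q T).
Local Notation inUH := (inUH d q T).
Local Notation u := (uplus q T).
Local Notation L k := (Tarc T k 0).
Local Notation okw := (all (fun k => (1 <= k < d)%N)).

Lemma T01_braid : (1 < d)%N ->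
  T 0%N * T 1%N * T 0%N * T 1%N = T 1%N * T 0%N * T 1%N * T 0%N.
Proof. by case: HB. Qed.

Lemma comm_T0 i : (2 <= i < d)%N -> comm (T 0%N) (T i).
Proof. by case: HB => _ + _ _ _; apply. Qed.

Lemma T_braid i : (1 <= i)%N -> (i.+1 < d)%N ->
  T i * T i.+1 * T i = T i.+1 * T i * T i.+1.
Proof. by case: HB => _ _ + _ _; apply. Qed.

Lemma comm_T_far i j : (1 <= i < d)%N -> (1 <= j < d)%N ->
  ((i + 2 <= j) || (j + 2 <= i))%N -> comm (T i) (T j).
Proof. by case: HB => _ _ _ + _; apply. Qed.

Lemma T0_invol : T 0%N * T 0%N = 1.
Proof. by case: HB => _ _ _ _ []. Qed.

Lemma T_quadratic i : (1 <= i < d)%N -> T i * T i = (q - 1) *: T i + q%:A.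
Proof. by case: HB => _ _ _ _ [_ +]; apply. Qed.

Lemma comm_T_Tto_far k a : (a.+2 <= k < d)%N -> comm (T k) (Tto T a 0).
Proof.
elim: a => [|a IHa] ka; first by rewrite Tto_00; apply/commr_sym/comm_T0; lia.
by rewrite Tto_S0; apply: commrM; [apply: comm_T_far | apply: IHa]; lia.
Qed.

Lemma comm_T_L_far i k : (k.+2 <= i < d)%N -> comm (T i) (L k).
Proof.
elim: k => [|k IHk] ik; first by rewrite Tarc_00; apply/commr_sym/comm_T0; lia.
by rewrite Tarc_S0; apply: commrM; first apply: commrM;
  [apply: comm_T_far | apply: IHk | apply: comm_T_far]; lia.
Qed.

Lemma comm_T0_L k : (k < d)%N -> comm (T 0%N) (L k).
Proof.
case: k => [|k]; first by rewrite Tarc_00.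
elim: k => [|k IHk] kd; first by rewrite Tarc_S0 Tarc_00 /comm !mulrA T01_braid.
by rewrite Tarc_S0; apply: commrM; first apply: commrM;
  [apply: comm_T0 | apply: IHk | apply: comm_T0]; lia.
Qed.

Lemma comm_T_L_lt i k : (1 <= i)%N -> (i < k < d)%N -> comm (T i) (L k).
Proof.
move=> i1; elim: k => [|k IHk] // ikd; rewrite Tarc_S0.
have [ik | ki | <-] := ltngtP i k.
- by apply: commrM; first apply: commrM;
    [apply: comm_T_far | apply: IHk | apply: comm_T_far]; lia.
- lia.
case: i i1 ikd {IHk} => [|i] // _ ikd; rewrite Tarc_S0.
by apply: commr_braid_sandwich; [apply: T_braid | apply: comm_T_L_far]; lia.
Qed.

Lemma comm_L_L k l : (l < k < d)%N -> comm (L k) (L l).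
Proof.
elim: l k => [|l IHl] k lkd; first by rewrite Tarc_00; apply/commr_sym/comm_T0_L; lia.
by rewrite Tarc_S0; apply: commrM; first apply: commrM;
  [apply/commr_sym/comm_T_L_lt | apply: IHl | apply/commr_sym/comm_T_L_lt]; lia.
Qed.

Local Notation factor k := ((q ^+ k)%:A + L k).

Lemma comm_T_factor_pair j : (j.+1 < d)%N -> comm (T j.+1) (factor j * factor j.+1).
Proof.
move=> jd; rewrite exprSr Tarc_S0; apply: commr_quadratic_sandwich.
  by apply: T_quadratic; lia.
by rewrite -Tarc_S0; apply/commr_sym/comm_L_L; lia.
Qed.

Lemma comm_factor x k : comm x (L k) -> comm x (factor k).
Proof. by apply: commrD; apply/commr_sym/comm_alg. Qed.

Lemma comm_uplus x j : (forall k, (k < j)%N -> comm x (L k)) -> comm x (u j).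
Proof.
move=> xL; rewrite /uplus big_nat; apply: commr_prod => k /andP[_ kj].
exact/comm_factor/xL.
Qed.

Lemma comm_T_uplus i j : (i < d)%N -> (j <= d)%N -> i != j -> comm (T i) (u j).
Proof.
move=> id jd ij; case: i => [|i] in id ij *.
  by apply: comm_uplus => k kj; apply: comm_T0_L; lia.
have [ji | ij'] := ltnP j i.+1.
  by apply: comm_uplus => k kj; apply: comm_T_L_far; lia.
have ij2 : (i.+2 <= j)%N by rewrite ltn_neqAle ij.
rewrite /uplus (big_cat_nat (leq0n i) (ltnW ij')) (big_ltn ij') (big_ltn ij2) /=.
apply: commrM; first by apply: comm_uplus => k ki; apply: comm_T_L_far; lia.
rewrite mulrA; apply: commrM; first by apply: comm_T_factor_pair; lia.
rewrite big_nat; apply: commr_prod => k /andP[ik kj].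
by apply/comm_factor/comm_T_L_lt; lia.
Qed.

Lemma uplus_T0 i : (1 <= i <= d)%N -> u i * T 0%N = u i.
Proof.
move=> id; rewrite -comm_T_uplus; [|lia..].
rewrite /uplus big_ltn; last by lia.
by rewrite mulrA expr0 Tarc_00 mulrDr mulr_algr !scale1r T0_invol addrC.
Qed.

Lemma inUH_mulT i k x : (1 <= k < d)%N -> (i <= d)%N -> k != i ->
  inUH i x -> inUH i (T k * x).
Proof.
move=> kd id ki [h [r [Hh [Sr ->]]]]; have HTk : inH (T k) by apply: inH_T.
rewrite mulrDr mulrA comm_T_uplus; [|lia..].
by rewrite -mulrA; apply: inUH_uHS; [apply: inHM | apply: inS_mull].
Qed.

Lemma T_Tto_lt k a : (1 <= k)%N -> (k < a < d)%N ->
  T k * Tto T a 0 = Tto T a 0 * T k.+1.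
Proof.
move=> k1; elim: a => [|a IHa] // kad; rewrite Tto_S0.
have [ka | ak | <-] := ltngtP k a.
- have c : comm (T k) (T a.+1) by apply: comm_T_far; lia.
  by rewrite mulrA c -mulrA IHa; [rewrite mulrA | lia].
- lia.
case: k k1 kad {IHa} => [|k] // _ kd; rewrite Tto_S0.
have c : comm (T k.+2) (Tto T k 0) by apply: comm_T_Tto_far; lia.
by rewrite !mulrA T_braid; [rewrite -mulrA c mulrA | lia..].
Qed.

Inductive span_TtoH : A -> Prop :=
| span_TtoH_gen a h of (a < d)%N & inH h : span_TtoH (Tto T a 0 * h)
| span_TtoH_add x y of span_TtoH x & span_TtoH y : span_TtoH (x + y)
| span_TtoH_scale c x of span_TtoH x : span_TtoH (c *: x).

Lemma span_TtoH_mulT k x : (1 <= k < d)%N -> span_TtoH x -> span_TtoH (T k * x).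
Proof.
move=> kd; elim=> [a h ad Hh | y z _ Sy _ Sz | c y _ Sy]; last first.
- by rewrite -scalerAr; apply: span_TtoH_scale.
- by rewrite mulrDr; apply: span_TtoH_add.
have HTk : inH (T k) by apply: inH_T.
rewrite mulrA; have [ka | ak | <-] := ltngtP k a.
- rewrite T_Tto_lt; [|lia..]; rewrite -mulrA.
  by apply: span_TtoH_gen => //; apply: inHM => //; apply: inH_T; lia.
- have [ka1 | ak1 | ->] := ltngtP k a.+1; first lia.
    rewrite comm_T_Tto_far; last lia.
    by rewrite -mulrA; apply: span_TtoH_gen => //; apply: inHM.
  by rewrite -Tto_S0; apply: span_TtoH_gen => //; lia.
case: k kd HTk => [|k] // kd _; rewrite Tto_S0 mulrA T_quadratic //.
rewrite !mulrDl -!scalerAl mul1r -Tto_S0.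
by apply: span_TtoH_add; apply: span_TtoH_scale; apply: span_TtoH_gen => //; lia.
Qed.

Lemma span_TtoH_Tw_T0 w : (0 < d)%N -> okw w -> span_TtoH (Tw T w * T 0%N).
Proof.
move=> d0; elim: w => [_ | k w IHw /andP[kd wd]].
  rewrite Tw_nil mul1r -Tto_00 -[Tto T 0 0]mulr1.
  by apply: span_TtoH_gen => //; apply: inH1.
by rewrite Tw_cons -mulrA; apply: span_TtoH_mulT => //; apply: IHw.
Qed.

Section Invertible.
Variable qi : K.
Hypothesis qqi : q * qi = 1.

Lemma T_rinv k : (1 <= k < d)%N -> T k * (qi *: (T k - (q - 1)%:A)) = 1.
Proof.
move=> kd; rewrite -scalerAr mulrBr mulr_algr T_quadratic // addrAC subrr add0r.
by rewrite scalerA mulrC qqi scale1r.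
Qed.

Lemma Tw_rinv w : okw w -> exists2 y, inH y & Tw T w * y = 1.
Proof.
elim: w => [_ | k w IHw /andP[kd /IHw[y Hy wy]]].
  by exists 1; [apply: inH1 | rewrite Tw_nil mulr1].
exists (y * (qi *: (T k - (q - 1)%:A))).
  apply: inHM => //; apply/inHZ/inHD; first exact: inH_T.
  by rewrite -scaleNr; apply/inHZ/inH1.
by rewrite Tw_cons -mulrA (mulrA (Tw T w)) wy mul1r T_rinv.
Qed.

Lemma Tto1_rinv i : (1 <= i < d)%N -> exists2 y, inH y & Tto T 1 i * y = 1.
Proof.
case: i => [|i] // id; rewrite Tto_1S; apply: Tw_rinv.
by apply/allP => k; rewrite mem_iota; lia.
Qed.

Lemma inUH_uplus_Tto i a : (1 <= i <= d)%N -> (a < d)%N -> inUH i (u i * Tto T a 0).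
Proof.
move=> id; elim: a => [|a IHa] ad.
  by rewrite Tto_00 uplus_T0 // -[u i]mulr1; apply: inUH_uH; apply: inH1.
have [<- | ai] := eqVneq a.+1 i.
  have [y Hy ty] : exists2 y, inH y & Tto T 1 a.+1 * y = 1 by apply: Tto1_rinv; lia.
  rewrite (uplus_Tto_split q _ ty) //.
  by apply: inUH_uHS; [apply: inHZ | apply: inS_uplus Hy; lia].
rewrite Tto_S0 mulrA -comm_T_uplus; [|lia..].
by rewrite -mulrA; apply: inUH_mulT => //; [lia | apply: IHa; lia].
Qed.

Lemma inUH_uplus_Tw_T0 i w : (1 <= i <= d)%N -> okw w -> inUH i (u i * Tw T w * T 0%N).
Proof.
move=> id wd; have d0 : (0 < d)%N by lia.
rewrite -mulrA; elim: (span_TtoH_Tw_T0 d0 wd) => [a h ad Hh | x y _ Ux _ Uy | c x _ Ux].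
- by rewrite mulrA; apply: inUH_mulr => //; apply: inUH_uplus_Tto.
- by rewrite mulrDr; apply: inUHD.
- by rewrite -scalerAr; apply: inUHZ.
Qed.

End Invertible.

End HeckeB.

Theorem lemma6p2 (K : comPzRingType) (A : algType K) (m : nat) (q : K)
    (T : nat -> A) :
  (1 <= m)%N ->
  (exists qi : K, q * qi = 1) ->
  HeckeB_rel (2 * m) q T ->
  let d := (2 * m)%N in
  let u := uplus q T in
  (* (a) *)
  (forall j i, (j <= d)%N -> (i < d)%N -> i != j -> u j * T i = T i * u j) /\
  (* (b) *)
  (forall i (y : A), (1 <= i < d)%N ->
     y * Tto T 1 i = 1 -> Tto T 1 i * y = 1 ->
     u i * Tto T i 0 = u i.+1 * y - (q ^+ i) *: (u i * y)) /\
  (* (c) *)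
  (forall (x : 'S_(2 * m)) (w : seq nat) i, (1 <= i <= d)%N ->
     reduced_expr x w ->
     exists h r, inH d T h /\ inSumHuH d q T i r /\
       u i * Tw T w * T 0%N = u i * h + r) /\
  (forall i (y : A), (1 <= i < d)%N ->
     y * Tto T 1 i = 1 -> Tto T 1 i * y = 1 ->
     exists r, inSumHuH d q T i r /\
       u i * Tto T i 0 = u i * (- (q ^+ i) *: y) + r).
Proof.
move=> _ [qi qqi] HB d u.
split; [|split; [|split]].
- by move=> j i jd id ij; apply/commr_sym/(comm_T_uplus HB).
- by move=> i y /andP[i1 _] _ ty; apply: uplus_Tto.
- by move=> x w i id [wd _ _]; apply: (inUH_uplus_Tw_T0 HB qqi).
move=> i y id yt ty; have [y' Hy' ty'] := Tto1_rinv HB qqi id.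
have -> : y = y' by rewrite -[y]mulr1 -ty' mulrA yt mul1r.
exists (u i.+1 * y'); split; first by apply: inS_uplus Hy'; lia.
by apply: (uplus_Tto_split q _ ty'); case/andP: id.
Qed.
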